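(* Let $d\ge1$ be an integer and let $\chi^2(d)$ denote a chi-square random variable with $d$ degrees of freedom. For every $t>0$, with $Z_d(t)=t-d\log\!\big(1+\tfrac td\big)$, $$\mathbb P\big(\chi^2(d)\ge d+t\big)\le\frac{1}{\sqrt{2\pi Z_d(t)}}\exp\!\Big(-\frac{Z_d(t)}{2}\Big).$$ *)

From Stdlib Require Import Reals Lra Lia Arith.
Open Scope R_scope.

(* Gamma(d/2) for a positive integer d:
   d = 2k   : Gamma(k)       = (k-1)!
   d = 2k+1 : Gamma(k + 1/2) = (2k)! / (4^k k!) * sqrt(pi) *)
Definition Gamma_half (d : nat) : R :=
  if Nat.even d then INR (fact (Nat.div2 d - 1))
  else INR (fact (2 * Nat.div2 d)) / (4 ^ Nat.div2 d * INR (fact (Nat.div2 d)))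
       * sqrt PI.

Definition chi2_density (d : nat) (u : R) : R :=
  if Rle_dec u 0 then 0
  else Rpower u (INR d / 2 - 1) * exp (- u / 2)
       / (Rpower 2 (INR d / 2) * Gamma_half d).

(* [chi2_tail d x p] : p = P(chi^2(d) >= x) = \int_x^\infty f_d(u) du,
   the improper integral being the limit of Riemann integrals over [x,b]. *)
Definition chi2_tail (d : nat) (x p : R) : Prop :=
  (forall b, x <= b -> inhabited (Riemann_integrable (chi2_density d) x b)) /\
  (forall eps, 0 < eps -> exists B, forall b, B <= b ->
     forall pr : Riemann_integrable (chi2_density d) x b,
       Rabs (RiemannInt pr - p) < eps).

Definition Zd (d : nat) (t : R) : R := t - INR d * ln (1 + t / INR d).

(* For [u >= d + t] the chi-square density is dominated by
   [C (u - d) / u * u^(d/2) e^(-u/2)], which is the derivative of [- 2 C u^(d/2) e^(-u/2)],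
   so the tail integral is at most [2 C (d+t)^(d/2) e^(-(d+t)/2)], the claimed bound.  The
   domination combines Stirling's lower bound [Gamma x >= sqrt (2 pi) x^(x-1/2) e^(-x)] at
   [x = d/2] with [u - d >= t >= sqrt (2 d Zd)].

   Stirling's lower bound is proved without limits.  Its gap decreases along [x -> x + 1]
   while the gap minus [1/(12x)] increases, so the gap is bounded below; were it negative
   somewhere, the doubling inequalities given by Wallis' integrals (even [d]) and by
   Legendre's duplication formula (odd [d]) would drive it to [-oo]. *)

From Coquelicot Require Import Coquelicot.
From Stdlib Require Import Reals Lra Lia Psatz Arith Classical.
Open Scope R_scope.

Lemma incr_of_is_derive_nonneg (f df : R -> R) (a b : R) : a <= b ->
  (forall x, a <= x <= b -> is_derive f x (df x)) ->
  (forall x, a <= x <= b -> 0 <= df x) -> f a <= f b.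
Proof.
intros hab hd hpos.
destruct (Req_dec a b) as [<-|hne]; [lra|].
destruct (MVT_gen f a b df) as [c [hc hmvt]];
  rewrite ?Rmin_left, ?Rmax_right in * by lra.
- intros x hx; apply hd; lra.
- intros x hx. apply continuity_pt_filterlim, (ex_derive_continuous (V := R_NormedModule)).
  exists (df x); apply hd; lra.
- assert (0 <= df c) by (apply hpos; lra). nra.
Qed.

Lemma ln_1plus_lt (s : R) : 0 < s -> ln (1 + s) < s.
Proof.
intros hs. rewrite <- (ln_exp s) at 2. apply ln_increasing; [lra|]. apply exp_ineq1; lra.
Qed.

Lemma ln_1plus_ge (s : R) : 0 <= s -> s - s ^ 2 / 2 <= ln (1 + s).
Proof.
intros hs.
enough (h : let f z := ln (1 + z) - z + z ^ 2 / 2 in f 0 <= f s)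
  by (cbv beta zeta in h; rewrite Rplus_0_r, ln_1 in h; lra).
apply (incr_of_is_derive_nonneg _ (fun z => z ^ 2 / (1 + z))); [lra| |].
- intros x hx. auto_derive; [lra|]. field; lra.
- intros x hx. apply Rdiv_le_0_compat; nra.
Qed.

(* Bounds on [ln ((1 + y) / (1 - y)) = 2 (y + y^3/3 + y^5/5 + ...)]. *)
Lemma ln_ratio_ge (y : R) : 0 <= y < 1 -> 2 * y <= ln (1 + y) - ln (1 - y).
Proof.
intros hy.
enough (h : let f z := ln (1 + z) - ln (1 - z) - 2 * z in f 0 <= f y)
  by (cbv beta zeta in h; rewrite Rplus_0_r, Rminus_0_r, ln_1 in h; lra).
apply (incr_of_is_derive_nonneg _ (fun z => 2 * z ^ 2 / ((1 + z) * (1 - z)))); [lra| |].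
- intros x hx. auto_derive; [lra|]. field; lra.
- intros x hx. apply Rdiv_le_0_compat; nra.
Qed.

Lemma ln_ratio_le (y : R) : 0 <= y < 1 ->
  ln (1 + y) - ln (1 - y) <= 2 * y + 2 * y ^ 3 / (3 * (1 - y ^ 2)).
Proof.
intros hy.
enough (h : let f z := 2 * z + 2 * z ^ 3 / (3 * (1 - z ^ 2)) - (ln (1 + z) - ln (1 - z))
            in f 0 <= f y).
{ cbv beta zeta in h. rewrite Rplus_0_r, Rminus_0_r, ln_1 in h.
  replace (2 * 0 + 2 * 0 ^ 3 / (3 * (1 - 0 ^ 2))) with 0 in h by field. lra. }
apply (incr_of_is_derive_nonneg _ (fun z => 4 * z ^ 4 / (3 * (1 - z ^ 2) ^ 2))); [lra| |].
- intros x hx. assert (1 - x ^ 2 <> 0) by nra.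
  auto_derive; [repeat split; lra|]. field; lra.
- intros x hx. assert (0 < 1 - x ^ 2) by nra.
  apply Rdiv_le_0_compat; nra.
Qed.

Lemma Gamma_half_even (n : nat) : Gamma_half (2 * S n) = INR (fact n).
Proof.
unfold Gamma_half. rewrite Nat.even_even, Nat.div2_double. do 2 f_equal. lia.
Qed.

Lemma Gamma_half_odd (n : nat) : Gamma_half (2 * n + 1) =
  INR (fact (2 * n)) / (4 ^ n * INR (fact n)) * sqrt PI.
Proof. unfold Gamma_half. now rewrite Nat.even_odd, Nat.div2_odd'. Qed.

Lemma Gamma_half_pos (d : nat) : (1 <= d)%nat -> 0 < Gamma_half d.
Proof.
intros hd. pose proof PI_RGT_0.
destruct (Nat.Even_or_Odd d) as [[k ->]|[k ->]].
- replace k with (S (k - 1)) by lia. rewrite Gamma_half_even. apply INR_fact_lt_0.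
- rewrite Gamma_half_odd. pose proof (INR_fact_lt_0 (2 * k)). pose proof (INR_fact_lt_0 k).
  pose proof (pow_lt 4 k ltac:(lra)). pose proof (sqrt_lt_R0 PI ltac:(lra)).
  apply Rmult_lt_0_compat; [apply Rdiv_lt_0_compat|]; nra.
Qed.

Lemma Gamma_half_add2 (d : nat) : (1 <= d)%nat ->
  Gamma_half (d + 2) = INR d / 2 * Gamma_half d.
Proof.
intros hd. destruct (Nat.Even_or_Odd d) as [[k ->]|[k ->]].
- replace k with (S (k - 1)) by lia. set (j := (k - 1)%nat).
  replace (2 * S j + 2)%nat with (2 * S (S j))%nat by lia.
  rewrite !Gamma_half_even, fact_simpl, !mult_INR, S_INR.
  simpl (INR 2). field.
- replace (2 * k + 1 + 2)%nat with (2 * S k + 1)%nat by lia.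
  rewrite !Gamma_half_odd. replace (2 * S k)%nat with (S (S (2 * k))) by lia.
  rewrite !fact_simpl, !mult_INR, !S_INR, plus_INR, mult_INR, <- tech_pow_Rmult.
  pose proof (INR_fact_lt_0 k). pose proof (pow_lt 4 k ltac:(lra)). pose proof (pos_INR k).
  simpl (INR 2); simpl (INR 1). field. lra.
Qed.

(* Legendre duplication [Gamma (n) Gamma (n + 1/2) = 2^(1 - 2n) sqrt pi Gamma (2n)]. *)
Lemma Gamma_half_dup (n : nat) :
  4 ^ S n * Gamma_half (2 * S n) * Gamma_half (2 * S n + 1) =
  2 * sqrt PI * Gamma_half (4 * S n).
Proof.
replace (4 * S n)%nat with (2 * S (2 * n + 1))%nat by lia.
rewrite Gamma_half_odd, !Gamma_half_even.
replace (2 * S n)%nat with (S (S (2 * n))) by lia.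
replace (2 * n + 1)%nat with (S (2 * n)) by lia.
rewrite !fact_simpl, !mult_INR, !S_INR, mult_INR.
pose proof (INR_fact_lt_0 n). pose proof (pow_lt 4 (S n) ltac:(lra)). pose proof (pos_INR n).
simpl (INR 2); simpl (INR 1). field. lra.
Qed.

Lemma ln_succ_ratio_eq (x : R) : 0 < x ->
  ln (x + 1) - ln x = ln (1 + / (2 * x + 1)) - ln (1 - / (2 * x + 1)).
Proof.
intros hx.
replace (1 + / (2 * x + 1)) with ((x + 1) / (x + / 2)) by (field; lra).
replace (1 - / (2 * x + 1)) with (x / (x + / 2)) by (field; lra).
rewrite !ln_div; lra.
Qed.

Lemma inv_2x_plus_1_bounds (x : R) : 0 < x -> 0 <= / (2 * x + 1) < 1.
Proof.
intros hx. split; [left; apply Rinv_0_lt_compat; lra|].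
rewrite <- Rinv_1. apply Rinv_lt_contravar; lra.
Qed.

Lemma ln_succ_ratio_ge (x : R) : 0 < x -> 1 <= (x + / 2) * (ln (x + 1) - ln x).
Proof.
intros hx. rewrite ln_succ_ratio_eq by lra.
pose proof (ln_ratio_ge _ (inv_2x_plus_1_bounds x hx)).
replace 1 with ((x + / 2) * (2 * / (2 * x + 1))) at 1 by (field; lra).
apply Rmult_le_compat_l; lra.
Qed.

Lemma ln_succ_ratio_le (x : R) : 0 < x ->
  (x + / 2) * (ln (x + 1) - ln x) <= 1 + / (12 * x) - / (12 * (x + 1)).
Proof.
intros hx. rewrite ln_succ_ratio_eq by lra.
pose proof (inv_2x_plus_1_bounds x hx) as hy.
pose proof (ln_ratio_le _ hy). set (y := / (2 * x + 1)) in *.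
replace (1 + / (12 * x) - / (12 * (x + 1)))
  with ((x + / 2) * (2 * y + 2 * y ^ 3 / (3 * (1 - y ^ 2)))).
- apply Rmult_le_compat_l; lra.
- unfold y. field. repeat split; try lra. nra.
Qed.

Definition stirling_gap (d : nat) : R :=
  ln (Gamma_half d) + INR d / 2 - (INR d / 2 - / 2) * ln (INR d / 2) - ln (2 * PI) / 2.

Lemma stirling_gap_sub_add2 (d : nat) : (1 <= d)%nat ->
  stirling_gap d - stirling_gap (d + 2) =
  (INR d / 2 + / 2) * (ln (INR d / 2 + 1) - ln (INR d / 2)) - 1.
Proof.
intros hd. pose proof (Gamma_half_pos d hd).
assert (hx : 0 < INR d / 2) by (apply lt_0_INR in hd; lra).
unfold stirling_gap. rewrite Gamma_half_add2 by exact hd. rewrite (ln_mult (INR d / 2)) by lra.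
replace (INR (d + 2) / 2) with (INR d / 2 + 1) by (rewrite plus_INR; simpl; field).
field.
Qed.

Lemma stirling_gap_add2_le (d : nat) : (1 <= d)%nat ->
  stirling_gap (d + 2) <= stirling_gap d.
Proof.
intros hd. pose proof (stirling_gap_sub_add2 d hd).
assert (hx : 0 < INR d / 2) by (apply lt_0_INR in hd; lra).
pose proof (ln_succ_ratio_ge _ hx). lra.
Qed.

Lemma stirling_gap_corrected_le_add2 (d : nat) : (1 <= d)%nat ->
  stirling_gap d - / (6 * INR d) <= stirling_gap (d + 2) - / (6 * INR (d + 2)).
Proof.
intros hd. pose proof (stirling_gap_sub_add2 d hd).
assert (hx : 0 < INR d / 2) by (apply lt_0_INR in hd; lra).
pose proof (ln_succ_ratio_le _ hx).
replace (INR (d + 2)) with (INR d + 2) by (rewrite plus_INR; simpl; ring).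
replace (/ (6 * INR d)) with (/ (12 * (INR d / 2))) by (field; lra).
replace (/ (6 * (INR d + 2))) with (/ (12 * (INR d / 2 + 1))) by (field; lra).
lra.
Qed.

Lemma stirling_gap_add_even_le (d j : nat) : (1 <= d)%nat ->
  stirling_gap (d + 2 * j) <= stirling_gap d.
Proof.
intros hd. induction j as [|j IH].
- rewrite Nat.add_0_r. lra.
- replace (d + 2 * S j)%nat with (d + 2 * j + 2)%nat by lia.
  pose proof (stirling_gap_add2_le (d + 2 * j) ltac:(lia)). lra.
Qed.

Lemma stirling_gap_add_even_ge (d j : nat) : (1 <= d)%nat ->
  stirling_gap d - / (6 * INR d) <= stirling_gap (d + 2 * j).
Proof.
intros hd.
enough (h : stirling_gap d - / (6 * INR d)
            <= stirling_gap (d + 2 * j) - / (6 * INR (d + 2 * j))).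
{ assert (0 < / (6 * INR (d + 2 * j))) by (apply Rinv_0_lt_compat, Rmult_lt_0_compat;
    [lra|apply lt_0_INR; lia]). lra. }
induction j as [|j IH].
- rewrite Nat.add_0_r. lra.
- replace (d + 2 * S j)%nat with (d + 2 * j + 2)%nat by lia.
  pose proof (stirling_gap_corrected_le_add2 (d + 2 * j) ltac:(lia)). lra.
Qed.

Definition wallis_int (k : nat) : R := RInt (fun x => sin x ^ k) 0 (PI / 2).

Lemma continuous_sin_pow (k : nat) (x : R) : continuous (fun y => sin y ^ k) x.
Proof.
apply (continuous_comp sin (fun y => y ^ k)); apply continuity_pt_filterlim.
- apply continuity_sin.
- apply derivable_continuous_pt, derivable_pt_pow.
Qed.

Lemma ex_RInt_sin_pow (k : nat) : ex_RInt (fun x => sin x ^ k) 0 (PI / 2).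
Proof.
apply (ex_RInt_continuous (V := R_CompleteNormedModule)).
intros z _. apply continuous_sin_pow.
Qed.

(* Integration by parts, [d/dx (- cos x sin^(k+1) x) = (k+2) sin^(k+2) x - (k+1) sin^k x]. *)
Lemma wallis_int_add2 (k : nat) :
  INR (k + 2) * wallis_int (k + 2) = INR (k + 1) * wallis_int k.
Proof.
pose proof PI_RGT_0.
set (g x := INR (k + 2) * sin x ^ (k + 2) - INR (k + 1) * sin x ^ k).
set (F x := - cos x * sin x ^ (k + 1)).
assert (hF : is_RInt g 0 (PI / 2) (minus (F (PI / 2)) (F 0))).
{ apply (is_RInt_derive (V := R_CompleteNormedModule) F).
  - intros x _. unfold F, g. auto_derive; [exact I|].
    replace (k + 2)%nat with (S (S k)) by lia. replace (k + 1)%nat with (S k) by lia.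
    rewrite !S_INR. simpl pred. simpl pow.
    assert (hcos : cos x * cos x = 1 - sin x * sin x)
      by (pose proof (sin2_cos2 x); unfold Rsqr in *; lra).
    transitivity (sin x * sin x * sin x ^ k
                  - (INR k + 1) * (cos x * cos x) * sin x ^ k); [ring|].
    rewrite hcos. ring.
  - intros x _. apply (continuous_minus (V := R_NormedModule));
      apply (continuous_scal_r (K := R_AbsRing) (V := R_NormedModule)), continuous_sin_pow. }
assert (hg : is_RInt g 0 (PI / 2)
               (INR (k + 2) * wallis_int (k + 2) - INR (k + 1) * wallis_int k)).
{ apply (is_RInt_minus (V := R_NormedModule)); apply (is_RInt_scal (V := R_NormedModule));
    apply (RInt_correct (V := R_CompleteNormedModule)), ex_RInt_sin_pow. }
assert (hF0 : minus (F (PI / 2)) (F 0) = 0).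
{ unfold F, minus, plus, opp; simpl. rewrite cos_PI2, sin_0, cos_0, Nat.add_1_r. simpl. ring. }
pose proof (is_RInt_unique _ _ _ _ hF). pose proof (is_RInt_unique _ _ _ _ hg). lra.
Qed.

Lemma wallis_int_0 : wallis_int 0 = PI / 2.
Proof. unfold wallis_int. simpl pow. rewrite RInt_const. cbn. ring. Qed.

Lemma wallis_int_1 : wallis_int 1 = 1.
Proof.
assert (h : is_RInt (fun x => sin x ^ 1) 0 (PI / 2) (minus (- cos (PI / 2)) (- cos 0))).
{ apply (is_RInt_derive (V := R_CompleteNormedModule) (fun x => - cos x)).
  - intros x _. auto_derive; [exact I|]. ring.
  - intros x _. apply continuous_sin_pow. }
unfold wallis_int. rewrite (is_RInt_unique _ _ _ _ h), cos_PI2, cos_0.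
unfold minus, plus, opp; simpl. ring.
Qed.

Lemma wallis_int_succ_le (k : nat) : wallis_int (S k) <= wallis_int k.
Proof.
pose proof PI_RGT_0.
apply RInt_le; try apply ex_RInt_sin_pow; [lra|].
intros x hx. simpl pow.
assert (0 <= sin x) by (apply sin_ge_0; lra). pose proof (SIN_bound x).
pose proof (pow_le (sin x) k ltac:(lra)). nra.
Qed.

Lemma wallis_int_even (n : nat) :
  wallis_int (2 * n) = PI / 2 * INR (fact (2 * n)) / (4 ^ n * INR (fact n) ^ 2).
Proof.
induction n as [|n IH].
- rewrite Nat.mul_0_r, wallis_int_0. simpl. field.
- pose proof (wallis_int_add2 (2 * n)) as hr.
  replace (2 * n + 2)%nat with (S (S (2 * n))) in hr by lia.
  replace (2 * S n)%nat with (S (S (2 * n))) by lia.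
  apply (Rmult_eq_reg_l (INR (S (S (2 * n))))); [|apply not_0_INR; lia].
  rewrite hr, IH, !fact_simpl, Nat.add_1_r, !mult_INR, !S_INR, mult_INR.
  pose proof (INR_fact_lt_0 n). pose proof (INR_fact_lt_0 (2 * n)). pose proof (pos_INR n).
  pose proof (pow_lt 4 n ltac:(lra)).
  simpl pow. simpl (INR 2). field. lra.
Qed.

Lemma wallis_int_odd (n : nat) :
  wallis_int (2 * n + 1) = 4 ^ n * INR (fact n) ^ 2 / INR (fact (2 * n + 1)).
Proof.
induction n as [|n IH].
- rewrite Nat.mul_0_r, Nat.add_0_l, wallis_int_1. simpl. field.
- pose proof (wallis_int_add2 (2 * n + 1)) as hr.
  replace (2 * n + 1 + 2)%nat with (S (S (2 * n + 1))) in hr by lia.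
  replace (2 * S n + 1)%nat with (S (S (2 * n + 1))) by lia.
  apply (Rmult_eq_reg_l (INR (S (S (2 * n + 1))))); [|apply not_0_INR; lia].
  rewrite hr, IH, !fact_simpl, !mult_INR, !S_INR, !plus_INR, mult_INR.
  pose proof (INR_fact_lt_0 n). pose proof (INR_fact_lt_0 (2 * n + 1)). pose proof (pos_INR n).
  simpl pow. simpl (INR 2). simpl (INR 1). field. lra.
Qed.

(* [wallis_int (2k+2) <= wallis_int (2k+1)] with the closed forms substituted. *)
Lemma wallis_ineq (k : nat) :
  PI * INR (fact (2 * k + 1)) ^ 2 <= INR (S k) * 4 ^ (2 * k + 1) * INR (fact k) ^ 4.
Proof.
pose proof (wallis_int_succ_le (2 * k + 1)) as hm.
replace (S (2 * k + 1)) with (2 * S k)%nat in hm by lia.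
rewrite wallis_int_even, wallis_int_odd in hm.
replace (2 * S k)%nat with (S (2 * k + 1)) in hm by lia.
rewrite !fact_simpl, !mult_INR in hm.
replace (INR (S (2 * k + 1))) with (2 * INR (S k)) in hm
  by (rewrite !S_INR, plus_INR, mult_INR; simpl; ring).
pose proof (INR_fact_lt_0 k). pose proof (INR_fact_lt_0 (2 * k + 1)).
pose proof (pow_lt 4 k ltac:(lra)). pose proof PI_RGT_0. pose proof (lt_0_INR (S k) ltac:(lia)).
set (a := INR (fact (2 * k + 1))) in *. set (b := INR (fact k)) in *. set (n := INR (S k)) in *.
replace (4 ^ (2 * k + 1)) with (4 * (4 ^ k) ^ 2)
  by (rewrite pow_add, (Nat.mul_comm 2 k), pow_mult; simpl; ring).
replace (4 ^ S k) with (4 * 4 ^ k) in hm by (simpl; ring).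
assert (hc : 0 < 4 * 4 ^ k * n * b ^ 2 * a) by (repeat apply Rmult_lt_0_compat; nra).
apply (Rmult_le_compat_r _ _ _ (Rlt_le _ _ hc)) in hm.
replace (PI / 2 * (2 * n * a) / (4 * 4 ^ k * (n * b) ^ 2) * (4 * 4 ^ k * n * b ^ 2 * a))
  with (PI * a ^ 2) in hm by (field; lra).
replace (4 ^ k * b ^ 2 / a * (4 * 4 ^ k * n * b ^ 2 * a))
  with (n * (4 * (4 ^ k) ^ 2) * b ^ 4) in hm by (field; lra).
exact hm.
Qed.

Lemma ln_sqrt (x : R) : 0 < x -> ln (sqrt x) = ln x / 2.
Proof.
intros hx. assert (h : ln (sqrt x * sqrt x) = ln x) by (rewrite sqrt_sqrt; lra).
rewrite ln_mult in h by (apply sqrt_lt_R0; lra). lra.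
Qed.

Lemma INR_double_half (n : nat) : INR (2 * n) / 2 = INR n.
Proof. rewrite mult_INR. simpl. field. Qed.

Lemma stirling_gap_dup (n : nat) : (1 <= n)%nat ->
  stirling_gap (4 * n) <= stirling_gap (2 * n) + stirling_gap (2 * n + 1).
Proof.
intros hn. destruct n as [|k]; [lia|].
pose proof (lt_0_INR (S k) ltac:(lia)) as hN. set (N := INR (S k)) in *.
pose proof PI_RGT_0. pose proof (Gamma_half_pos (2 * S k) ltac:(lia)).
pose proof (Gamma_half_pos (2 * S k + 1) ltac:(lia)).
pose proof (Gamma_half_pos (4 * S k) ltac:(lia)).
pose proof (pow_lt 4 (S k) ltac:(lra)). pose proof (sqrt_lt_R0 PI ltac:(lra)).
assert (hdup := f_equal ln (Gamma_half_dup k)).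
rewrite !ln_mult, ln_pow, ln_sqrt in hdup by
  (lra || apply Rmult_lt_0_compat; lra).
unfold stirling_gap.
replace (INR (4 * S k) / 2) with (2 * N) by
  (unfold N; rewrite mult_INR, S_INR; simpl; field).
replace (INR (2 * S k + 1) / 2) with (N + / 2) by
  (unfold N; rewrite plus_INR, mult_INR, S_INR; simpl; field).
rewrite INR_double_half. fold N.
assert (hinv : 0 < / (2 * N)) by (apply Rinv_0_lt_compat; lra).
replace (ln (N + / 2)) with (ln N + ln (1 + / (2 * N)))
  by (rewrite <- ln_mult by lra; f_equal; field; lra).
rewrite (ln_mult 2 N), (ln_mult 2 PI) by lra. fold N in hdup.
replace (ln 4) with (2 * ln 2) in hdup by
  (replace 4 with (2 * 2) by ring; rewrite ln_mult by lra; ring).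
assert (N * ln (1 + / (2 * N)) <= / 2).
{ replace (/ 2) with (N * / (2 * N)) by (field; lra).
  apply Rmult_le_compat_l; [lra|]. left; apply ln_1plus_lt; lra. }
nra.
Qed.

Lemma stirling_gap_double (n : nat) : (1 <= n)%nat ->
  stirling_gap (4 * n) <= 2 * stirling_gap (2 * n).
Proof.
intros hn. destruct n as [|k]; [lia|].
pose proof (lt_0_INR (S k) ltac:(lia)) as hN. set (N := INR (S k)) in *.
pose proof PI_RGT_0. pose proof (INR_fact_lt_0 k). pose proof (INR_fact_lt_0 (2 * k + 1)).
pose proof (wallis_ineq k) as hw. fold N in hw.
apply ln_le in hw; [|apply Rmult_lt_0_compat; [|apply pow_lt]; lra].
rewrite !ln_mult, !ln_pow in hw by
  (repeat (lra || apply Rmult_lt_0_compat || apply pow_lt)).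
replace (ln 4) with (2 * ln 2) in hw by
  (replace 4 with (2 * 2) by ring; rewrite ln_mult by lra; ring).
replace (INR (2 * k + 1)) with (2 * N - 1) in hw by
  (unfold N; rewrite plus_INR, mult_INR, S_INR; simpl; ring).
simpl (INR 2) in hw. simpl (INR 4) in hw.
unfold stirling_gap.
replace (4 * S k)%nat with (2 * S (2 * k + 1))%nat by lia.
rewrite !Gamma_half_even, !INR_double_half.
replace (INR (S (2 * k + 1))) with (2 * N) by (unfold N; rewrite !S_INR, plus_INR, mult_INR; simpl; ring).
fold N. rewrite (ln_mult 2 N), (ln_mult 2 PI) by lra.
lra.
Qed.

Lemma no_uniform_descent (u : nat -> R) (L eta : R) :
  (forall j, L <= u j) -> (forall j, u (S j) <= u j - eta) -> eta <= 0.
Proof.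
intros hlow hstep. apply Rnot_lt_le; intros heta.
assert (hdecr : forall j, u j <= u 0%nat - INR j * eta).
{ induction j as [|j IH]; [simpl; lra|]. rewrite S_INR. pose proof (hstep j). lra. }
destruct (INR_archimed eta (u 0%nat - L) heta) as [j hj].
pose proof (hdecr j). pose proof (hlow j). lra.
Qed.

Lemma pow2_mul_pos (j n : nat) : (1 <= n)%nat -> (1 <= 2 ^ j * n)%nat.
Proof. intros hn. pose proof (Nat.pow_nonzero 2 j ltac:(lia)). nia. Qed.

Lemma stirling_gap_dyadic_ge (j n : nat) : (1 <= n)%nat ->
  stirling_gap 2 - / (6 * INR 2) <= stirling_gap (2 * (2 ^ j * n)).
Proof.
intros hn. pose proof (pow2_mul_pos j n hn).
replace (2 * (2 ^ j * n))%nat with (2 + 2 * (2 ^ j * n - 1))%nat by lia.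
apply stirling_gap_add_even_ge. lia.
Qed.

(* If the gap were negative at some [2n], doubling [n] repeatedly would drive it to [-oo]. *)
Lemma stirling_gap_even_nonneg (n : nat) : (1 <= n)%nat -> 0 <= stirling_gap (2 * n).
Proof.
intros hn. apply Rnot_lt_le; intros hneg.
set (u j := stirling_gap (2 * (2 ^ j * n))).
assert (hu0 : u 0%nat = stirling_gap (2 * n)) by (unfold u; now rewrite Nat.pow_0_r, Nat.mul_1_l).
assert (hstep : forall j, u (S j) <= 2 * u j).
{ intros j. unfold u. replace (2 * (2 ^ S j * n))%nat with (4 * (2 ^ j * n))%nat by (simpl; lia).
  apply stirling_gap_double, pow2_mul_pos, hn. }
assert (hu_le : forall j, u j <= u 0%nat).
{ induction j as [|j IH]; [lra|]. pose proof (hstep j). lra. }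
enough (- u 0%nat <= 0) by lra.
apply (no_uniform_descent u (stirling_gap 2 - / (6 * INR 2))).
- intros j. apply stirling_gap_dyadic_ge, hn.
- intros j. pose proof (hstep j). pose proof (hu_le j). lra.
Qed.

(* A negative gap at [2m+1] bounds the gap at all larger odd indices, so by duplication
   each doubling lowers the even gap by a fixed amount. *)
Lemma stirling_gap_odd_nonneg (m : nat) : 0 <= stirling_gap (2 * m + 1).
Proof.
apply Rnot_lt_le; intros hneg.
set (u j := stirling_gap (2 * (2 ^ j * S m))).
apply (Rlt_not_le _ _ hneg), Ropp_le_cancel. rewrite Ropp_0.
apply (no_uniform_descent u (stirling_gap 2 - / (6 * INR 2))).
- intros j. apply stirling_gap_dyadic_ge. lia.
- intros j. pose proof (pow2_mul_pos j (S m) ltac:(lia)) as hN.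
  unfold u. replace (2 * (2 ^ S j * S m))%nat with (4 * (2 ^ j * S m))%nat by (simpl; lia).
  pose proof (stirling_gap_dup _ hN).
  pose proof (stirling_gap_add_even_le (2 * m + 1) (2 ^ j * S m - m) ltac:(lia)).
  replace (2 * m + 1 + 2 * (2 ^ j * S m - m))%nat with (2 * (2 ^ j * S m) + 1)%nat in *
    by (pose proof (Nat.pow_nonzero 2 j ltac:(lia)); nia).
  lra.
Qed.

Lemma stirling_gap_nonneg (d : nat) : (1 <= d)%nat -> 0 <= stirling_gap d.
Proof.
intros hd. destruct (Nat.Even_or_Odd d) as [[n ->]|[m ->]].
- apply stirling_gap_even_nonneg. lia.
- apply stirling_gap_odd_nonneg.
Qed.

Lemma ln_Gamma_half_ge (d : nat) : (1 <= d)%nat ->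
  (INR d / 2 - / 2) * ln (INR d / 2) - INR d / 2 + ln (2 * PI) / 2 <= ln (Gamma_half d).
Proof. intros hd. pose proof (stirling_gap_nonneg d hd). unfold stirling_gap in *. lra. Qed.

Lemma Zd_pos (d : nat) (t : R) : (1 <= d)%nat -> 0 < t -> 0 < Zd d t.
Proof.
intros hd ht. pose proof (lt_0_INR d ltac:(lia)) as hD. unfold Zd.
pose proof (ln_1plus_lt (t / INR d) ltac:(apply Rdiv_lt_0_compat; lra)).
enough (INR d * ln (1 + t / INR d) < INR d * (t / INR d)) by (field_simplify in H0; lra).
apply Rmult_lt_compat_l; lra.
Qed.

Lemma Zd_le_sqr (d : nat) (t : R) : (1 <= d)%nat -> 0 < t -> 2 * INR d * Zd d t <= t ^ 2.
Proof.
intros hd ht. pose proof (lt_0_INR d ltac:(lia)) as hD. unfold Zd.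
pose proof (ln_1plus_ge (t / INR d) ltac:(left; apply Rdiv_lt_0_compat; lra)) as hl.
apply (Rmult_le_compat_l (2 * INR d * INR d)) in hl; [|nra].
replace (2 * INR d * INR d * (t / INR d - (t / INR d) ^ 2 / 2))
  with (2 * INR d * t - t ^ 2) in hl by (field; lra).
nra.
Qed.

Lemma ln_le_inv (a b : R) : 0 < a -> 0 < b -> ln a <= ln b -> a <= b.
Proof.
intros ha hb h. apply Rnot_lt_le; intros hlt.
pose proof (ln_increasing b a hb hlt). lra.
Qed.

Definition chi2_kernel (d : nat) (u : R) : R := exp (- u / 2 + INR d / 2 * ln u).

Lemma is_derive_chi2_kernel (d : nat) (u : R) : 0 < u ->
  is_derive (chi2_kernel d) u (- chi2_kernel d u * (u - INR d) / (2 * u)).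
Proof. intros hu. unfold chi2_kernel. auto_derive; [lra|]. unfold Rdiv. field. lra. Qed.

Lemma chi2_density_eq (d : nat) (u : R) : (1 <= d)%nat -> 0 < u ->
  chi2_density d u = chi2_kernel d u / (u * (Rpower 2 (INR d / 2) * Gamma_half d)).
Proof.
intros hd hu. pose proof (Gamma_half_pos d hd).
unfold chi2_density, chi2_kernel, Rpower.
destruct (Rle_dec u 0) as [|_]; [lra|].
replace (- u / 2 + INR d / 2 * ln u) with ((INR d / 2 - 1) * ln u + - u / 2 + ln u) by ring.
rewrite !exp_plus, exp_ln by lra. field.
pose proof (exp_pos (INR d / 2 * ln 2)). lra.
Qed.

Definition envelope_const (d : nat) (t : R) : R :=
  / sqrt (8 * PI * Zd d t) * exp (INR d / 2 - INR d / 2 * ln (INR d)).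

Lemma envelope_const_pos (d : nat) (t : R) : (1 <= d)%nat -> 0 < t -> 0 < envelope_const d t.
Proof.
intros hd ht. pose proof (Zd_pos d t hd ht). pose proof PI_RGT_0.
unfold envelope_const. apply Rmult_lt_0_compat; [|apply exp_pos].
apply Rinv_0_lt_compat, sqrt_lt_R0. nra.
Qed.

(* Stirling's lower bound on [Gamma (d/2)] together with [u - d >= t >= sqrt (2 d Zd)]. *)
Lemma inv_chi2_normalizer_le (d : nat) (t u : R) :
  (1 <= d)%nat -> 0 < t -> INR d + t <= u ->
  / (Rpower 2 (INR d / 2) * Gamma_half d) <= envelope_const d t * (u - INR d).
Proof.
intros hd ht hu.
pose proof (lt_0_INR d ltac:(lia)) as hD. pose proof (Zd_pos d t hd ht) as hZ.
pose proof (Gamma_half_pos d hd). pose proof PI_RGT_0.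
pose proof (envelope_const_pos d t hd ht).
assert (0 < Rpower 2 (INR d / 2)) by apply exp_pos.
apply ln_le_inv; [apply Rinv_0_lt_compat, Rmult_lt_0_compat; lra|nra|].
unfold envelope_const.
rewrite ln_Rinv, !ln_mult, ln_Rpower, ln_Rinv, ln_exp, ln_sqrt by
  (repeat (lra || apply Rmult_lt_0_compat || apply Rinv_0_lt_compat || apply sqrt_lt_R0
           || apply exp_pos)).
pose proof (ln_Gamma_half_ge d hd) as hG.
rewrite ln_div, (ln_mult 2 PI) in hG by lra.
assert (hln : ln (2 * INR d * Zd d t) <= ln (t ^ 2)) by (apply ln_le; [nra|apply Zd_le_sqr; assumption]).
rewrite ln_pow, !ln_mult in hln by nra.
assert (ln t <= ln (u - INR d)) by (apply ln_le; lra).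
replace 8 with (2 * (2 * 2)) by ring. rewrite !ln_mult by nra.
simpl (INR 2) in hln. nra.
Qed.

Lemma chi2_density_le_envelope (d : nat) (t u : R) :
  (1 <= d)%nat -> 0 < t -> INR d + t <= u ->
  chi2_density d u <= envelope_const d t * chi2_kernel d u * (u - INR d) / u.
Proof.
intros hd ht hu. pose proof (lt_0_INR d ltac:(lia)).
rewrite chi2_density_eq by (assumption || lra).
pose proof (inv_chi2_normalizer_le d t u hd ht hu) as hkey.
assert (hk : 0 <= chi2_kernel d u / u)
  by (apply Rdiv_le_0_compat; [left; apply exp_pos|lra]).
apply (Rmult_le_compat_l _ _ _ hk) in hkey.
pose proof (Gamma_half_pos d hd). pose proof (exp_pos (INR d / 2 * ln 2)).
unfold Rpower in *.
replace (chi2_kernel d u / (u * (exp (INR d / 2 * ln 2) * Gamma_half d)))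
  with (chi2_kernel d u / u * / (exp (INR d / 2 * ln 2) * Gamma_half d)) by (field; lra).
replace (envelope_const d t * chi2_kernel d u * (u - INR d) / u)
  with (chi2_kernel d u / u * (envelope_const d t * (u - INR d))) by (field; lra).
exact hkey.
Qed.

Lemma continuous_chi2_density (d : nat) (u : R) : 0 < u -> continuous (chi2_density d) u.
Proof.
intros hu.
apply (continuous_ext_loc _ (fun y => Rpower y (INR d / 2 - 1) * exp (- y / 2)
                                     / (Rpower 2 (INR d / 2) * Gamma_half d))).
- apply (filter_imp (fun y => 0 < y)); [|exact (open_gt 0 u hu)].
  intros y hy. unfold chi2_density. destruct (Rle_dec y 0); [lra|reflexivity].
- apply (ex_derive_continuous (V := R_NormedModule)). unfold Rpower. auto_derive. exact hu.
Qed.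

Lemma chi2_density_nonneg (d : nat) (u : R) : (1 <= d)%nat -> 0 <= chi2_density d u.
Proof.
intros hd. destruct (Rle_dec u 0) as [hu|hu].
- unfold chi2_density. destruct (Rle_dec u 0); [lra|contradiction].
- rewrite chi2_density_eq by (assumption || lra).
  pose proof (Gamma_half_pos d hd). pose proof (exp_pos (INR d / 2 * ln 2)).
  unfold Rpower, chi2_kernel. apply Rdiv_le_0_compat; [left; apply exp_pos|].
  apply Rmult_lt_0_compat; [lra|]. apply Rmult_lt_0_compat; lra.
Qed.

Lemma ex_RInt_chi2_density (d : nat) (a b : R) : 0 < a -> a <= b ->
  ex_RInt (chi2_density d) a b.
Proof.
intros ha hab. apply (ex_RInt_continuous (V := R_CompleteNormedModule)).
intros z hz. rewrite Rmin_left in hz by lra. apply continuous_chi2_density. lra.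
Qed.

(* The envelope is the derivative of [- 2 envelope_const d t * chi2_kernel d]. *)
Lemma RInt_chi2_density_le (d : nat) (t b : R) :
  (1 <= d)%nat -> 0 < t -> INR d + t <= b ->
  RInt (chi2_density d) (INR d + t) b
  <= 2 * envelope_const d t * chi2_kernel d (INR d + t).
Proof.
intros hd ht hb. pose proof (lt_0_INR d ltac:(lia)).
pose proof (envelope_const_pos d t hd ht). set (C := envelope_const d t) in *.
set (F u := - (2 * C) * chi2_kernel d u).
set (g u := C * chi2_kernel d u * (u - INR d) / u).
assert (hI : is_RInt g (INR d + t) b (minus (F b) (F (INR d + t)))).
{ apply (is_RInt_derive (V := R_CompleteNormedModule) F);
    intros x hx; rewrite Rmin_left, Rmax_right in hx by lra.
  - replace (g x) with (- (2 * C) * (- chi2_kernel d x * (x - INR d) / (2 * x)))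
      by (unfold g; field; lra).
    apply is_derive_scal, is_derive_chi2_kernel. lra.
  - apply (ex_derive_continuous (V := R_NormedModule)). unfold g, chi2_kernel.
    auto_derive. lra. }
assert (hle : RInt (chi2_density d) (INR d + t) b <= RInt g (INR d + t) b).
{ apply RInt_le; [lra|apply ex_RInt_chi2_density; lra|exists (minus (F b) (F (INR d + t))); exact hI|].
  intros x hx. apply chi2_density_le_envelope; (assumption || lra). }
rewrite (is_RInt_unique _ _ _ _ hI) in hle.
assert (0 < chi2_kernel d b) by apply exp_pos.
unfold minus, plus, opp, F in hle; simpl in hle. nra.
Qed.

Lemma envelope_tail_eq (d : nat) (t : R) : (1 <= d)%nat -> 0 < t ->
  2 * envelope_const d t * chi2_kernel d (INR d + t)
  = / sqrt (2 * PI * Zd d t) * exp (- Zd d t / 2).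
Proof.
intros hd ht. pose proof (lt_0_INR d ltac:(lia)). pose proof (Zd_pos d t hd ht).
pose proof PI_RGT_0.
assert (hs : sqrt (8 * PI * Zd d t) = 2 * sqrt (2 * PI * Zd d t)).
{ replace (8 * PI * Zd d t) with (2 ^ 2 * (2 * PI * Zd d t)) by ring.
  rewrite sqrt_mult, sqrt_pow2 by nra. reflexivity. }
assert (he : exp (INR d / 2 - INR d / 2 * ln (INR d)) * chi2_kernel d (INR d + t)
             = exp (- Zd d t / 2)).
{ unfold chi2_kernel, Zd. rewrite <- exp_plus. f_equal.
  replace (1 + t / INR d) with ((INR d + t) / INR d) by (field; lra).
  rewrite ln_div by lra. field. }
pose proof (sqrt_lt_R0 (2 * PI * Zd d t) ltac:(nra)).
unfold envelope_const. rewrite hs, <- he. field. lra.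
Qed.

(* The limit is the supremum of the partial integrals. *)
Lemma improper_RInt_of_bounded_nonneg (f : R -> R) (a M : R) :
  (forall b, a <= b -> ex_RInt f a b) ->
  (forall x, a <= x -> 0 <= f x) ->
  (forall b, a <= b -> RInt f a b <= M) ->
  exists p,
    ((forall b, a <= b -> inhabited (Riemann_integrable f a b)) /\
     (forall eps, 0 < eps -> exists B, forall b, B <= b ->
        forall pr : Riemann_integrable f a b, Rabs (RiemannInt pr - p) < eps))
    /\ p <= M.
Proof.
intros hint hpos hM.
set (E y := exists b, a <= b /\ y = RInt f a b).
assert (hE : bound E) by (exists M; intros y [b [hb ->]]; auto).
assert (hE0 : exists y, E y) by (exists (RInt f a a), a; split; [lra|reflexivity]).
destruct (completeness E hE hE0) as [p [hub hlub]].
assert (hmono : forall b0 b, a <= b0 <= b -> RInt f a b0 <= RInt f a b).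
{ intros b0 b hb.
  assert (hb0b : ex_RInt f b0 b) by (apply (ex_RInt_Chasles_2 f a); [lra|apply hint; lra]).
  rewrite <- (RInt_Chasles f a b0 b) by (exact hb0b || (apply hint; lra)).
  assert (0 <= RInt f b0 b) by (apply RInt_ge_0; [lra|exact hb0b|intros x hx; apply hpos; lra]).
  unfold plus; simpl. lra. }
exists p. split; [split|].
- intros b hb. constructor. apply ex_RInt_Reals_0, hint, hb.
- intros eps heps.
  destruct (classic (exists b, a <= b /\ p - eps < RInt f a b)) as [[b0 [hb0 hlt]]|hno].
  + exists b0. intros b hb pr. rewrite <- RInt_Reals.
    assert (RInt f a b <= p) by (apply hub; exists b; split; [lra|reflexivity]).
    pose proof (hmono b0 b ltac:(lra)). apply Rabs_def1; lra.
  + enough (p <= p - eps) by lra.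
    apply hlub. intros y [b [hb ->]]. apply Rnot_lt_le. intros hlt. apply hno. eauto.
- apply hlub. intros y [b [hb ->]]. auto.
Qed.

Theorem lemma2 (d : nat) (t : R) (hd : (1 <= d)%nat) (ht : 0 < t) :
  exists p, chi2_tail d (INR d + t) p /\
    p <= / sqrt (2 * PI * Zd d t) * exp (- Zd d t / 2).
Proof.
pose proof (lt_0_INR d ltac:(lia)).
apply improper_RInt_of_bounded_nonneg.
- intros b hb. apply ex_RInt_chi2_density; lra.
- intros x _. apply chi2_density_nonneg, hd.
- intros b hb. rewrite <- envelope_tail_eq by assumption.
  apply RInt_chi2_density_le; assumption.
Qed.
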